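(* On the 36-hole square board $S=\{0,1,\dots,5\}^2$, let $b$ be a board position which is solvable and which is invariant under the $180^\circ$ rotation $(x,y)\mapsto(5-x,5-y)$. Equivalently, $b$ has one of the symmetry types 1–5: square symmetry, $90^\circ$ rotational symmetry, both diagonal reflections, both orthogonal reflections, or $180^\circ$ rotation. Then $b$ lies in position class A, the position class of the four-peg position $\{(2,2),(2,3),(3,2),(3,3)\}$.
   Context: A board position on $S=\{0,\dots,5\}^2$ is a subset of $S$ (the occupied holes). A jump: given $d\in\{(\pm1,0),(0,\pm1)\}$ and $p$ with $p,p+d,p+2d\in S$, $p,p+d$ occupied and $p+2d$ empty, the jump removes the pegs at $p,p+d$ and puts a peg at $p+2d$. A position is solvable if some sequence of jumps leads to exactly one peg. Position classes. For a position $b$ and $i\in\{0,1,2\}$ let $N_i=|\{(x,y)\in b: x+y\equiv i\pmod 3\}|$ and $M_i=|\{(x,y)\in b: x-y\equiv i\pmod 3\}|$. The position class of $b$ is the vector $$(N_1+N_2,\ N_0+N_2,\ N_0+N_1,\ M_1+M_2,\ M_0+M_2,\ M_0+M_1)\bmod 2.$$ Two positions are in the same position class iff these vectors agree. The symmetries are the dihedral group of the square acting about the centre $(2.5,2.5)$. *)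

From Stdlib Require Import Relations.
From HB Require Import structures.
From mathcomp Require Import all_boot.
Set Implicit Arguments. Unset Strict Implicit. Unset Printing Implicit Defensive.

Definition hole := ('I_6 * 'I_6)%type.
Definition position := {set hole}.

Definition line3 (p q r : hole) : bool :=
  let '(px, py) := (val p.1, val p.2) in
  let '(qx, qy) := (val q.1, val q.2) in
  let '(rx, ry) := (val r.1, val r.2) in
  [|| [&& qy == py, ry == py, qx == px.+1 & rx == px.+2],
      [&& qy == py, ry == py, qx.+1 == px & rx.+2 == px],
      [&& qx == px, rx == px, qy == py.+1 & ry == py.+2]
    | [&& qx == px, rx == px, qy.+1 == py & ry.+2 == py]].

Definition jump (b b' : position) : Prop :=
  exists p q r : hole,
    [/\ line3 p q r, p \in b, q \in b, r \notin b &
        b' = ((b :\ p) :\ q) :|: [set r]].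

Definition reachable : relation position := clos_refl_trans position jump.

Definition solvable (b : position) : Prop :=
  exists b' : position, reachable b b' /\ #|b'| = 1.

Definition rot180 (p : hole) : hole := (rev_ord p.1, rev_ord p.2).

Definition rot180_invariant (b : position) : Prop := rot180 @: b = b.

(* N_i and M_i counts; x - y mod 3 computed as (x + 6 - y) %% 3 since y <= 5. *)
Definition Ncount (b : position) (i : nat) : nat :=
  #|[set p in b | (val p.1 + val p.2) %% 3 == i]|.
Definition Mcount (b : position) (i : nat) : nat :=
  #|[set p in b | (val p.1 + 6 - val p.2) %% 3 == i]|.

Definition pos_class (b : position) : seq bool :=
  [:: odd (Ncount b 1 + Ncount b 2); odd (Ncount b 0 + Ncount b 2);
      odd (Ncount b 0 + Ncount b 1);
      odd (Mcount b 1 + Mcount b 2); odd (Mcount b 0 + Mcount b 2);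
      odd (Mcount b 0 + Mcount b 1)].

Definition h (x y : nat) : hole := (inord x, inord y).

Definition centre4 : position := [set h 2 2; h 2 3; h 3 2; h 3 3].
Definition classA : seq bool := pos_class centre4.

From mathcomp Require Import all_boot zify.

Set Implicit Arguments.
Unset Strict Implicit.
Unset Printing Implicit Defensive.

(* Colour hole (x, y) by (x + y) mod 3 and by (x - y) mod 3. Along any line of three
   holes both colourings take all three values, so a jump changes the number of pegs
   avoiding a given colour by an even amount: the six parities forming the position
   class are invariant. The 180 degree rotation pairs the holes without fixed points
   and preserves the colour classes {(x + y) mod 3 = 2} and {(x - y) mod 3 = 0}, so a
   symmetric position has an even number of pegs off each of them. For the final peg
   x this forces (x + y) mod 3 = 2 and (x - y) mod 3 = 0, which determines the class. *)

Section Counting.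

Variable T : finType.
Implicit Types (A : {set T}) (P : pred T).

Lemma card_set_in_sum A P : #|[set x in A | P x]| = \sum_(x in A) P x.
Proof.
rewrite -sum1_card big_mkcond [RHS]big_mkcond /=.
by apply: eq_bigr => x _; rewrite !inE; case: (x \in A); case: (P x).
Qed.

Lemma sum_move A P p q r : p \in A -> q \in A -> r \notin A -> p != q ->
  \sum_(x in (A :\ p :\ q) :|: [set r]) P x + P p + P q = \sum_(x in A) P x + P r.
Proof.
move=> Ap Aq Ar pq.
have qAp : q \in A :\ p by rewrite !inE eq_sym pq.
have rA' : r \notin A :\ p :\ q by rewrite !inE (negbTE Ar) !andbF.
rewrite setUC big_setU1 //= (big_setD1 p Ap) (big_setD1 q qAp) /=; lia.
Qed.

Lemma odd_card_move A P p q r : p \in A -> q \in A -> r \notin A -> p != q ->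
  ~~ odd (P p + P q + P r) ->
  odd #|[set x in (A :\ p :\ q) :|: [set r] | P x]| = odd #|[set x in A | P x]|.
Proof.
move=> Ap Aq Ar pq even_pqr.
have odd_r : odd (P r) = odd (P p + P q).
  by move: even_pqr; rewrite oddD; case: (odd (P r)); case: odd.
apply: (@addIb (odd (P p + P q))); rewrite !card_set_in_sum -oddD addnA.
by rewrite sum_move // oddD odd_r.
Qed.

Lemma even_card_involution (s : T -> T) A :
  involutive s -> (forall x, s x != x) -> s @: A = A -> ~~ odd #|A|.
Proof.
move=> sK s_fixfree sA.
(* Split A by whether x precedes s x; s exchanges the two halves. *)
pose rk (x : T) : nat := enum_rank x.
have sAE x : (s x \in A) = (x \in A) by rewrite -{1}sA (can_imset_pre _ sK) inE sK.
have split_lt x : 1 = (rk x < rk (s x)) + (rk (s x) < rk x).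
  have : rk x != rk (s x) by apply: contra (s_fixfree x) => /eqP/val_inj/enum_rank_inj <-.
  by rewrite neq_ltn; case: ltngtP.
rewrite -sum1_card (eq_bigr _ (fun x _ => split_lt x)) big_split /=.
rewrite [X in _ + X](reindex_inj (can_inj sK)) /=.
rewrite (eq_bigl _ _ sAE).
under [X in _ + X]eq_bigr do rewrite sK.
by rewrite addnn odd_double.
Qed.

End Counting.

Definition resN (p : hole) : nat := (val p.1 + val p.2) %% 3.
Definition resM (p : hole) : nat := (val p.1 + 6 - val p.2) %% 3.

Lemma resN_lt3 p : resN p < 3. Proof. exact: ltn_pmod. Qed.
Lemma resM_lt3 p : resM p < 3. Proof. exact: ltn_pmod. Qed.

Definition rainbow (c : hole -> nat) : Prop :=
  forall p q r, line3 p q r -> uniq [:: c p; c q; c r].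

Lemma rainbow_resN : rainbow resN.
Proof.
move=> [[px ?] [py ?]] [[qx ?] [qy ?]] [[rx ?] [ry ?]].
rewrite /line3 /resN /= !inE !negb_or.
by case/or4P => /and4P [/eqP ? /eqP ? /eqP ? /eqP ?]; apply/and3P; split; apply/eqP; lia.
Qed.

Lemma rainbow_resM : rainbow resM.
Proof.
move=> [[px ?] [py ?]] [[qx ?] [qy ?]] [[rx ?] [ry ?]].
rewrite /line3 /resM /= !inE !negb_or.
by case/or4P => /and4P [/eqP ? /eqP ? /eqP ? /eqP ?]; apply/and3P; split; apply/eqP; lia.
Qed.

Definition off_parity (c : hole -> nat) (k : nat) (b : position) : bool :=
  odd #|[set p in b | c p != k]|.

Lemma off_parity_set1 c k x : off_parity c k [set x] = (c x != k).
Proof. by rewrite /off_parity card_set_in_sum big_set1; case: (c x != k). Qed.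

Lemma card_residue_pair (c : hole -> nat) (b : position) (i j k : nat) :
  (forall p, c p < 3) -> uniq [:: i; j; k] -> all (fun n => n < 3) [:: i; j; k] ->
  #|[set p in b | c p == i]| + #|[set p in b | c p == j]| = #|[set p in b | c p != k]|.
Proof.
move=> c_lt3 ijk ijk_lt3; rewrite !card_set_in_sum -big_split; apply: eq_bigr => p _ /=.
move: (c_lt3 p) ijk ijk_lt3; rewrite /= !inE !negb_or.
by case: (c p) => [|[|[|]]] //; case: i => [|[|[|]]] //; case: j => [|[|[|]]] //;
  case: k => [|[|[|]]].
Qed.

Lemma pos_classE b : pos_class b =
  [:: off_parity resN 0 b; off_parity resN 1 b; off_parity resN 2 b;
      off_parity resM 0 b; off_parity resM 1 b; off_parity resM 2 b].
Proof.
rewrite /pos_class /off_parity; congr [:: odd _; odd _; odd _; odd _; odd _; odd _].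
all: by apply: card_residue_pair => //; first [exact: resN_lt3 | exact: resM_lt3].
Qed.

Lemma classAE : classA = [:: true; true; false; false; true; true].
Proof.
have h_eq x y x' y' : x < 6 -> y < 6 -> x' < 6 -> y' < 6 ->
    (h x y == h x' y') = (x == x') && (y == y').
  by move=> *; rewrite /h xpair_eqE -!val_eqE /= !inordK.
have sum_centre4 (F : hole -> nat) :
    \sum_(p in centre4) F p = F (h 2 2) + (F (h 2 3) + (F (h 3 2) + F (h 3 3))).
  by rewrite /centre4 -!setUA !big_setU1 ?big_set1 // !inE !h_eq.
rewrite /classA pos_classE /off_parity !card_set_in_sum !sum_centre4.
by rewrite /resN /resM /h /= !inordK.
Qed.

Section Colouring.

Variable c : hole -> nat.
Hypothesis c_lt3 : forall p, c p < 3.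
Hypothesis c_rainbow : rainbow c.

Lemma off_parity_jump k b b' : k < 3 -> jump b b' -> off_parity c k b' = off_parity c k b.
Proof.
move=> k_lt3 [p [q [r [pqr bp bq br ->]]]].
have /and3P [] := c_rainbow pqr; rewrite !inE !negb_or => /andP [pq pr] qr _.
apply: odd_card_move => //; first by apply: contraNneq pq => ->.
(* Exactly two of p, q, r avoid the colour k. *)
move: (c_lt3 p) (c_lt3 q) (c_lt3 r) pq pr qr k_lt3.
by case: (c p) => [|[|[|]]] //; case: (c q) => [|[|[|]]] //; case: (c r) => [|[|[|]]] //;
  case: k => [|[|[|]]].
Qed.

Lemma off_parity_reachable k b b' : k < 3 -> reachable b b' ->
  off_parity c k b' = off_parity c k b.
Proof.
move=> k_lt3; elim=> [x y /(off_parity_jump k_lt3) // | // | x y z _ -> _ ->] //.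
Qed.

End Colouring.


Lemma pos_class_reachable b b' : reachable b b' -> pos_class b' = pos_class b.
Proof.
move=> reach; rewrite !pos_classE.
by rewrite !(off_parity_reachable resN_lt3 rainbow_resN _ reach,
             off_parity_reachable resM_lt3 rainbow_resM _ reach).
Qed.

Lemma rot180K : involutive rot180.
Proof. by case=> x y; rewrite /rot180 /= !rev_ordK. Qed.

Lemma rot180_neq p : rot180 p != p.
Proof.
case: p => [[x ?] y]; rewrite /rot180 xpair_eqE negb_and -val_eqE /=.
by apply/orP; left; apply/eqP; lia.
Qed.

Lemma resN_rot180 p : (resN (rot180 p) != 2) = (resN p != 2).
Proof. case: p => [[x ?] [y ?]]; rewrite /resN /=; congr negb; apply/eqP/eqP; lia. Qed.

Lemma resM_rot180 p : (resM (rot180 p) != 0) = (resM p != 0).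
Proof. case: p => [[x ?] [y ?]]; rewrite /resM /=; congr negb; apply/eqP/eqP; lia. Qed.

Lemma off_parity_rot180 c k b : rot180_invariant b ->
  (forall p, (c (rot180 p) != k) = (c p != k)) -> off_parity c k b = false.
Proof.
move=> b_sym ck_sym; apply/negbTE/(even_card_involution rot180K rot180_neq).
have b_rot p : (rot180 p \in b) = (p \in b).
  by rewrite -{2}b_sym (can_imset_pre _ rot180K) inE.
by apply/setP => p; rewrite (can_imset_pre _ rot180K) !inE ck_sym b_rot.
Qed.

Theorem mainTheorem4 (b : position) :
  solvable b -> rot180_invariant b -> pos_class b = classA.
Proof.
case=> b' [reach /eqP/cards1P [x b'E]] b_sym.
have resN_x : resN x = 2.
  apply/eqP/negbFE; rewrite -off_parity_set1 -b'E.
  rewrite (off_parity_reachable resN_lt3 rainbow_resN _ reach) //.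
  exact: off_parity_rot180 b_sym resN_rot180.
have resM_x : resM x = 0.
  apply/eqP/negbFE; rewrite -off_parity_set1 -b'E.
  rewrite (off_parity_reachable resM_lt3 rainbow_resM _ reach) //.
  exact: off_parity_rot180 b_sym resM_rot180.
rewrite classAE -(pos_class_reachable reach) b'E pos_classE !off_parity_set1.
by rewrite resN_x resM_x.
Qed.
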